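(* Under the setting of the context, let $f:E\times\mathbb R^d\to\mathbb R$ be bounded and Lipschitz continuous with respect to the second variable, uniformly in the first. Then for all $T\ge0$, $$\sup_{0\le t\le T}\ m^{-2}\Bigl|\sum_{k=0}^{\lfloor m^2t\rfloor-1}f(\xi_k,S_k/m)-\sum_{k=0}^{\lfloor m^2t\rfloor-1}\bar f(S_k/m)\Bigr|\longrightarrow0$$ in probability as $m\to+\infty$, where $\bar f(y)=\sum_{i\in E}f(i,y)\mu(i)$.
   Context: Let $d\ge1$, $(e_1,\dots,e_d)$ the canonical basis, $\mathcal V=\{\pm e_1,\dots,\pm e_d\}$. Let $E$ be a finite set and $P$ an irreducible and aperiodic stochastic matrix on $E$ with unique invariant probability $\mu$. For $k\in E$, $y\in\mathbb R^d$, $p(k,y,\cdot)$ is a probability on $\mathcal V$, with $y\mapsto p(k,y,u)$ twice continuously differentiable with bounded derivatives; $g(k,y)=\sum_uu\,p(k,y,u)$ satisfies $\sum_k\mu(k)g(k,y)=0$ for all $y$. For an integer $m\ge1$, $(\xi_n,S_n)_{n\ge0}$ is a Markov chain on $E\times\mathbb Z^d$ (depending on $m$) with $S_0=0$ and $\mathbb P(\xi_{n+1}=k,S_{n+1}=S_n+u\mid\xi_0,\dots,\xi_n,S_0,\dots,S_n)=P(\xi_n,k)p(\xi_n,S_n/m,u)$ for $k\in E$, $u\in\mathcal V$. *)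

From HB Require Import structures.
From mathcomp Require Import all_boot all_order all_algebra.
From mathcomp Require Import all_classical all_reals all_analysis.
Set Implicit Arguments. Unset Strict Implicit. Unset Printing Implicit Defensive.
Import Order.TTheory GRing.Theory Num.Theory.
Import numFieldNormedType.Exports.
Local Open Scope ring_scope.

Section Defs.
Variable R : realType.

Variable E : finType.

Fixpoint Pn (P : E -> E -> R) (n : nat) (i j : E) : R :=
  match n with
  | 0%N => if i == j then 1 else 0
  | n'.+1 => \sum_(k : E) Pn P n' i k * P k j
  end.

Definition stochastic (P : E -> E -> R) : Prop :=
  (forall i j, 0 <= P i j) /\ (forall i, \sum_(j : E) P i j = 1).

Definition irreducible (P : E -> E -> R) : Prop :=
  forall i j, exists n : nat, 0 < Pn P n i j.

Definition aperiodic (P : E -> E -> R) : Prop :=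
  forall i (q : nat), (forall n : nat, (0 < n)%N -> 0 < Pn P n i i -> (q %| n)%N) -> q = 1%N.

Definition probability_on (nu : E -> R) : Prop :=
  (forall i, 0 <= nu i) /\ \sum_(i : E) nu i = 1.

Definition invariant_law (P : E -> E -> R) (mu : E -> R) : Prop :=
  forall j, \sum_(i : E) mu i * P i j = mu j.

Variable d : nat.

Definition evec (i : 'I_d) : 'rV[R]_d := delta_mx 0 i.

(* a direction is encoded as (i, b) : 'I_d * bool, meaning +e_i if b, -e_i otherwise *)
Definition dir := ('I_d * bool)%type.
Definition dvec (u : dir) : 'rV[R]_d := (if u.2 then 1 else -1) *: evec u.1.

Definition C2_bounded (F : 'rV[R]_d -> R) : Prop :=
  (forall i y, derivable F y (evec i)) /\
  (forall i j y, derivable ('D_(evec i) F) y (evec j)) /\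
  (forall i, continuous ('D_(evec i) F)) /\
  (forall i j, continuous ('D_(evec j) ('D_(evec i) F))) /\
  (exists M : R, forall i j y,
      `|'D_(evec i) F y| <= M /\ `|'D_(evec j) ('D_(evec i) F) y| <= M).

(* A trajectory of length N: states xi_0..xi_N and increments u_1..u_N (u n = S_{n+1}-S_n). *)
Definition traj (N : nat) := ({ffun 'I_N.+1 -> E} * {ffun 'I_N -> dir})%type.

Definition pxi N (w : traj N) (k : nat) : E := w.1 (inord k).

Definition pS N (w : traj N) (k : nat) : 'rV[R]_d :=
  \sum_(i < N | (i < k)%N) dvec (w.2 i).

Definition path_prob (P : E -> E -> R) (p : E -> 'rV[R]_d -> dir -> R)
  (nu : E -> R) (m N : nat) (w : traj N) : R :=
  nu (pxi w 0) *
  \prod_(n < N) (P (pxi w n) (pxi w n.+1) *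
                 p (pxi w n) ((m%:R)^-1 *: pS w n) (w.2 n)).

Definition prob_event (P : E -> E -> R) (p : E -> 'rV[R]_d -> dir -> R)
  (nu : E -> R) (m N : nat) (A : traj N -> Prop) : R :=
  \sum_(w : traj N | `[< A w >]) path_prob P p nu m w.

End Defs.

From HB Require Import structures.
From mathcomp Require Import all_boot all_order all_algebra.
From mathcomp Require Import all_classical all_reals all_analysis.
From mathcomp Require Import ring lra.
Import Order.TTheory GRing.Theory Num.Theory.
Import numFieldNormedType.Exports.
Local Open Scope ring_scope.
Local Open Scope classical_set_scope.
Set Implicit Arguments. Unset Strict Implicit. Unset Printing Implicit Defensive.

(* Solve the Poisson equation [h - P h = f - fbar] in the Markov variable: by
   irreducibility the kernel of [I - P] consists of the constants, so its range is
   the space of [mu]-centred functions, and [h] inherits boundedness and the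
   Lipschitz property from [f].  Then [sum_(k < n) (f - fbar)(xi_k, S_k/m)] is a
   martingale [M_n], with increments [h(xi_(k+1), S_k/m) - (P h)(xi_k, S_k/m)]
   bounded by [2 H], plus a telescoping remainder of size [O(1 + n/m)] since
   [S_k/m] moves by [O(1/m)] per step.  Orthogonality of the increments gives
   [E M_n^2 <= 4 H^2 n].  Comparing [M_n] with [M] at the grid point
   [m * (n %/ m)] costs [O(m)], and Chebyshev's inequality at the [mT + 1] grid
   points bounds the probability of an [eps m^2] deviation by [O(1/m)]. *)

Lemma norm_sum_mul_le (R : realType) (I : finType) (a x : I -> R) (c : R) :
  (forall i, `|x i| <= c) -> `|\sum_i a i * x i| <= (\sum_i `|a i|) * c.
Proof.
move=> xc; rewrite mulr_suml; apply: le_trans (ler_norm_sum _ _ _) _.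
by apply: ler_sum => i _; rewrite normrM ler_wpM2l.
Qed.

Lemma kermx_sub_corank1 (F : fieldType) n (A : 'M[F]_n) (c : 'cV[F]_n) (r : 'rV[F]_n) :
  c != 0 -> A *m c = 0 -> (kermx A <= r)%MS -> (kermx c <= A)%MS.
Proof.
move=> c0 Ac0 kerA.
have Ac : (A <= kermx c)%MS by apply/sub_kermxP.
have rk_c : \rank c = 1%N.
  by apply/eqP; rewrite eqn_leq rank_leq_col lt0n mxrank_eq0.
have rk_A : (n - 1 <= \rank A)%N.
  have := mxrankS kerA; rewrite mxrank_ker => /(leq_trans)/(_ (rank_leq_row r)).
  by rewrite leq_subLR addnC -leq_subLR.
by rewrite -(mxrank_leqif_sup Ac).2 eqn_leq mxrankS //= mxrank_ker rk_c.
Qed.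

Section PoissonEquation.
Variables (R : realType) (E : finType) (P : E -> E -> R).
Hypotheses (sP : stochastic P) (irrP : irreducible P).

Definition harmonic (v : E -> R) := forall i, v i = \sum_j P i j * v j.

Lemma Pn_ge0 n i j : 0 <= Pn P n i j.
Proof.
have [P0 _] := sP; elim: n i j => [|n IH] i j /=; first by case: (i == j).
by apply: sumr_ge0 => k _; apply: mulr_ge0.
Qed.

Lemma harmonic_Pn (v : E -> R) : harmonic v -> forall n i, v i = \sum_j Pn P n i j * v j.
Proof.
move=> hv; elim=> [|n IH] i /=.
  rewrite (bigD1 i) //= eqxx mul1r big1 ?addr0 // => j.
  by rewrite eq_sym => /negPf ->; rewrite mul0r.
under eq_bigr do rewrite mulr_suml.
rewrite exchange_big IH; apply: eq_bigr => k _.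
by rewrite hv mulr_sumr; apply: eq_bigr => j _; rewrite mulrA.
Qed.

Lemma harmonic_const (v : E -> R) : harmonic v -> forall i j, v i = v j.
Proof.
have [_ P1] := sP; move=> hv.
suff vmax i0 : (forall k, v k <= v i0) -> forall j, v j = v i0.
  move=> i j; pose i0 := [arg max_(k > i) v k]%O.
  have i0_max : forall k, v k <= v i0.
    by rewrite /i0; case: arg_maxP => // a _ amax k; apply: amax.
  by rewrite !(vmax i0).
move=> i0_max j.
pose w k := v i0 - v k.
(* maximum principle: [w] is harmonic, nonnegative and vanishes at [i0] *)
have hw : harmonic w.
  move=> i; under eq_bigr do rewrite mulrBr.
  by rewrite sumrB -mulr_suml P1 mul1r -hv.
have [n Pn_pos] := irrP i0 j.
have w0 : \sum_k Pn P n i0 k * w k = 0 by rewrite -harmonic_Pn // /w subrr.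
have w_ge0 : forall k, true -> 0 <= Pn P n i0 k * w k.
  by move=> k _; rewrite mulr_ge0 ?Pn_ge0 // subr_ge0.
move: (psumr_eq0P w_ge0 w0 (i := j) isT) => /eqP.
by rewrite mulf_eq0 gt_eqF //= subr_eq0 => /eqP.
Qed.

Lemma sum_enum_val (V : nmodType) (F : E -> V) :
  \sum_(a < #|E|) F (enum_val a) = \sum_i F i.
Proof. by rewrite -big_enum_val. Qed.

Variable mu : E -> R.
Hypotheses (mu_prob : probability_on mu) (mu_inv : invariant_law P mu).

Lemma poisson_equation : exists Q : E -> E -> R,
  forall g : E -> R, \sum_i mu i * g i = 0 ->
  forall i, \sum_j g j * Q j i - \sum_k P i k * (\sum_j g j * Q j k) = g i.
Proof.
have [_ mu1] := mu_prob.
pose n := #|E|.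
pose rowE (g : E -> R) : 'rV[R]_n := \row_a g (enum_val a).
pose funE (x : 'rV[R]_n) (e : E) := x 0 (enum_rank e).
pose A : 'M[R]_n := 1%:M - (\matrix_(a, b) P (enum_val a) (enum_val b))^T.
pose c : 'cV[R]_n := \col_a mu (enum_val a).
have AE x e : funE (x *m A) e = funE x e - \sum_k P e k * funE x k.
  rewrite /funE mulmxBr mulmx1 !mxE -sum_enum_val; congr (_ - _).
  by apply: eq_bigr => b _; rewrite !mxE enum_rankK enum_valK mulrC.
have c0 : c != 0.
  apply: contra_neq (@oner_neq0 R) => c0; rewrite -mu1 -sum_enum_val.
  by apply: big1 => a _; have := congr1 (fun M : 'cV[R]_n => M a 0) c0; rewrite !mxE.
have Ac0 : A *m c = 0.
  rewrite mulmxBl mul1mx; apply/matrixP => a z; rewrite !mxE (ord1 z).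
  rewrite -[X in X - _]mu_inv -sum_enum_val; apply/eqP; rewrite subr_eq0; apply/eqP.
  by apply: eq_bigr => b _; rewrite !mxE mulrC.
have kerA : (kermx A <= (const_mx 1 : 'rV[R]_n))%MS.
  apply/row_subP => a; set x := row a (kermx A).
  have xA : x *m A = 0 by rewrite /x -row_mul mulmx_ker row0.
  clearbody x.
  have hx : harmonic (funE x).
    by move=> e; apply/eqP; rewrite -subr_eq0 -AE xA /funE mxE.
  have -> : x = x 0 a *: const_mx 1.
    apply/matrixP => z b; rewrite !mxE (ord1 z) mulr1.
    by have := harmonic_const hx (enum_val b) (enum_val a); rewrite /funE !enum_valK.
  by rewrite scalemx_sub.
have centered_in_range := kermx_sub_corank1 c0 Ac0 kerA.
exists (fun j i => pinvmx A (enum_rank j) (enum_rank i)) => g g0 i.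
have gA : (rowE g <= A)%MS.
  apply: submx_trans centered_in_range; apply/sub_kermxP/matrixP => z z'.
  rewrite !mxE -{}[RHS]g0 -sum_enum_val.
  by apply: eq_bigr => a _; rewrite !mxE mulrC.
have solE k : funE (rowE g *m pinvmx A) k = \sum_j g j * pinvmx A (enum_rank j) (enum_rank k).
  by rewrite /funE mxE -sum_enum_val; apply: eq_bigr => b _; rewrite !mxE enum_valK.
have := AE (rowE g *m pinvmx A) i; rewrite (mulmxKpV gA) {1}/funE mxE enum_rankK => ->.
by rewrite solE; congr (_ - _); apply: eq_bigr => k _; rewrite solE.
Qed.

End PoissonEquation.

Section Trajectories.
Variables (R : realType) (E : finType) (d : nat).

Definition rcons_traj N (v : traj E d N) (j : E) (u : dir d) : traj E d N.+1 :=
  ([ffun i : 'I_N.+2 => if unlift ord_max i is Some i' then v.1 i' else j],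
   [ffun i : 'I_N.+1 => if unlift ord_max i is Some i' then v.2 i' else u]).

Lemma rcons_traj_bij N :
  bijective (fun x : traj E d N * (E * dir d) => rcons_traj x.1 x.2.1 x.2.2).
Proof.
exists (fun w : traj E d N.+1 =>
  (([ffun i => w.1 (lift ord_max i)], [ffun i => w.2 (lift ord_max i)]),
   (w.1 ord_max, w.2 ord_max))).
- case=> [[v1 v2] [j u]]; rewrite /rcons_traj /= !ffunE !unlift_none.
  by congr (_, _); congr (_, _); apply/ffunP => i; rewrite !ffunE liftK.
- case=> w1 w2; rewrite /rcons_traj /=; congr (_, _); apply/ffunP => i;
  by rewrite !ffunE; case: unliftP => [i' ->|->]; rewrite ?ffunE.
Qed.

Lemma sum_traj_rcons (V : nmodType) N (F : traj E d N.+1 -> V) :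
  \sum_w F w = \sum_v \sum_j \sum_u F (rcons_traj v j u).
Proof.
rewrite (reindex _ (onW_bij _ (@rcons_traj_bij N))) /=.
by under [RHS]eq_bigr do rewrite pair_bigA; rewrite pair_bigA.
Qed.

Lemma pxi_rcons_traj N (v : traj E d N) j u k :
  (k <= N)%N -> pxi (rcons_traj v j u) k = pxi v k.
Proof.
move=> kN; have kN2 : (k < N.+2)%N by rewrite ltnS leqW.
rewrite /pxi ffunE; case: unliftP => [i' /(congr1 (@nat_of_ord _))|/(congr1 (@nat_of_ord _))].
  rewrite lift_max inordK // => ki; congr (v.1 _); apply/val_inj.
  by rewrite /= inordK // ki.
by rewrite inordK //= => kN1; move: kN; rewrite kN1 ltnn.
Qed.

Lemma pxi_rcons_traj_last N (v : traj E d N) j u : pxi (rcons_traj v j u) N.+1 = j.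
Proof.
rewrite /pxi ffunE; case: unliftP => [i' /(congr1 (@nat_of_ord _))|//].
by rewrite lift_max inordK // => iN; have := ltn_ord i'; rewrite -iN ltnn.
Qed.

Lemma rcons_traj_dir N (v : traj E d N) j u (i : 'I_N) :
  (rcons_traj v j u).2 (widen_ord (leqnSn N) i) = v.2 i.
Proof.
have -> : widen_ord (leqnSn N) i = lift ord_max i by apply/val_inj; exact: (esym (lift_max i)).
by rewrite ffunE liftK.
Qed.

Lemma pS_rcons_traj N (v : traj E d N) j u k :
  (k <= N)%N -> pS R (rcons_traj v j u) k = pS R v k.
Proof.
move=> kN; rewrite /pS big_mkcond big_ord_recr /= ltnNge kN addr0 [RHS]big_mkcond.
by apply: eq_bigr => i _; rewrite rcons_traj_dir.
Qed.

Lemma pS_succ N (w : traj E d N) k :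
  pS R w k.+1 - pS R w k = \sum_(i < N | val i == k) dvec R (w.2 i).
Proof.
rewrite /pS [in RHS]big_mkcond (big_mkcond (fun i : 'I_N => (i < k.+1)%N)).
rewrite (big_mkcond (fun i : 'I_N => (i < k)%N)) -sumrB; apply: eq_bigr => i _.
by rewrite ltnS leq_eqVlt; case: eqP => [->|_] /=; rewrite ?ltnn ?subr0 // subrr.
Qed.

Definition step_norm := \sum_(u : dir d) `|dvec R u|.

Lemma norm_pS_succ N (w : traj E d N) k : `|pS R w k.+1 - pS R w k| <= step_norm.
Proof.
rewrite pS_succ; case: (ltnP k N) => kN.
  rewrite (big_pred1 (Ordinal kN)) => [|i]; last by rewrite /= -val_eqE.
  by rewrite /step_norm (bigD1 (w.2 (Ordinal kN))) //= lerDl sumr_ge0.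
rewrite big_pred0 ?normr0 ?sumr_ge0 // => i; apply/negbTE.
by rewrite neq_ltn (leq_trans (ltn_ord i) kN).
Qed.

Variables (P : E -> E -> R) (p : E -> 'rV[R]_d -> dir d -> R) (nu : E -> R) (m : nat).

Definition scaled_pos N (w : traj E d N) k := (m%:R)^-1 *: pS R w k.

Lemma scaled_pos_rcons_traj N (v : traj E d N) j u k :
  (k <= N)%N -> scaled_pos (rcons_traj v j u) k = scaled_pos v k.
Proof. by move=> kN; rewrite /scaled_pos pS_rcons_traj. Qed.

Lemma path_prob_rcons_traj N (v : traj E d N) j u :
  path_prob P p nu m (rcons_traj v j u) =
  path_prob P p nu m v * (P (pxi v N) j * p (pxi v N) (scaled_pos v N) u).
Proof.
rewrite /path_prob big_ord_recr -[in RHS]mulrA; congr (_ * (_ * _)).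
- by rewrite pxi_rcons_traj.
- apply: eq_bigr => i _; have iN := ltnW (ltn_ord i).
  by rewrite rcons_traj_dir /= !pxi_rcons_traj ?pS_rcons_traj.
- by rewrite /= pxi_rcons_traj_last pxi_rcons_traj // pS_rcons_traj // ffunE unlift_none.
Qed.

End Trajectories.

Lemma sum_weighted_sqrD (R : realType) (I : finType) (a x : I -> R) (M : R) :
  \sum_i a i = 1 -> \sum_i a i * x i = 0 ->
  \sum_i a i * (M + x i) ^+ 2 = M ^+ 2 + \sum_i a i * x i ^+ 2.
Proof.
move=> a1 ax0.
have -> : \sum_i a i * (M + x i) ^+ 2 =
    \sum_i a i * M ^+ 2 + (2 * M * \sum_i a i * x i + \sum_i a i * x i ^+ 2).
  by rewrite mulr_sumr -!big_split; apply: eq_bigr => i _ /=; ring.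
by rewrite -mulr_suml a1 mul1r ax0 mulr0 add0r.
Qed.

Lemma sqr_le_of_norm_le (R : realType) (x c : R) : `|x| <= c -> x ^+ 2 <= c ^+ 2.
Proof.
move=> xc; rewrite -real_normK ?num_real // lerXn2r ?nnegrE //.
exact: le_trans xc.
Qed.

Section Expectation.
Variables (R : realType) (E : finType) (d : nat).
Variables (P : E -> E -> R) (p : E -> 'rV[R]_d -> dir d -> R) (nu : E -> R) (m : nat).
Hypotheses (sP : stochastic P) (p_ge0 : forall k y u, 0 <= p k y u)
  (p_sum1 : forall k y, \sum_u p k y u = 1) (nu_ge0 : forall i, 0 <= nu i).

Local Notation pos := (scaled_pos R m).

Definition expect N (F : traj E d N -> R) := \sum_w path_prob P p nu m w * F w.

Lemma path_prob_ge0 N (w : traj E d N) : 0 <= path_prob P p nu m w.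
Proof.
have [P0 _] := sP.
by rewrite /path_prob mulr_ge0 // prodr_ge0 // => i _; rewrite mulr_ge0.
Qed.

Lemma ler_expect N (F G : traj E d N -> R) :
  (forall w, F w <= G w) -> expect F <= expect G.
Proof. by move=> FG; apply: ler_sum => w _; rewrite ler_wpM2l ?path_prob_ge0. Qed.

Lemma expectD N (F G : traj E d N -> R) :
  expect (fun w => F w + G w) = expect F + expect G.
Proof. by rewrite /expect -big_split; apply: eq_bigr => w _; rewrite mulrDr. Qed.

Lemma expectMr N (F : traj E d N -> R) c : expect (fun w => F w * c) = expect F * c.
Proof. by rewrite /expect mulr_suml; apply: eq_bigr => w _; rewrite mulrA. Qed.

Lemma expect_sum N (I : finType) (F : I -> traj E d N -> R) :
  expect (fun w => \sum_i F i w) = \sum_i expect (F i).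
Proof.
rewrite /expect exchange_big; apply: eq_bigr => w _; exact: mulr_sumr.
Qed.

Lemma prob_event_le_expect N (A : traj E d N -> Prop) (S : traj E d N -> R) :
  (forall w, 0 <= S w) -> (forall w, A w -> 1 <= S w) ->
  prob_event P p nu m A <= expect S.
Proof.
move=> S0 AS; rewrite /prob_event /expect big_mkcond; apply: ler_sum => w _.
case: asboolP => [/AS Sw|_]; last by rewrite mulr_ge0 ?path_prob_ge0.
by rewrite -[X in X <= _]mulr1 ler_wpM2l ?path_prob_ge0.
Qed.

Lemma expect_rcons_traj N (F : traj E d N.+1 -> R) : expect F =
  expect (fun v => \sum_j \sum_u
    P (pxi v N) j * p (pxi v N) (pos v N) u * F (rcons_traj v j u)).
Proof.
rewrite /expect sum_traj_rcons; apply: eq_bigr => v _; rewrite mulr_sumr.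
apply: eq_bigr => j _; rewrite mulr_sumr; apply: eq_bigr => u _.
by rewrite path_prob_rcons_traj !mulrA.
Qed.

Lemma sum_transition_dir (i : E) y (F : E -> R) :
  \sum_j \sum_u P i j * p i y u * F j = \sum_j P i j * F j.
Proof.
apply: eq_bigr => j _; under eq_bigr do rewrite mulrAC.
by rewrite -mulr_sumr p_sum1 mulr1.
Qed.

Lemma expect_rcons_traj_const N (F : traj E d N -> R) (G : traj E d N.+1 -> R) :
  (forall v j u, G (rcons_traj v j u) = F v) -> expect G = expect F.
Proof.
have [_ P1] := sP; move=> GF; rewrite expect_rcons_traj; apply: eq_bigr => v _.
under eq_bigr do under eq_bigr do rewrite GF.
by rewrite sum_transition_dir -mulr_suml P1 mul1r.
Qed.

(* equals [1] when [nu] is a probability; only [0 <= init_mass] is needed *)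
Definition init_mass := \sum_(w : traj E d 0) nu (pxi w 0).

Lemma init_mass_ge0 : 0 <= init_mass.
Proof. exact: sumr_ge0. Qed.

Lemma expect_cst N c : expect (fun _ : traj E d N => c) = c * init_mass.
Proof.
elim: N => [|N IH]; last by rewrite (@expect_rcons_traj_const N (fun=> c)).
rewrite /expect /init_mass mulr_sumr; apply: eq_bigr => w _.
by rewrite /path_prob big_ord0 mulr1 mulrC.
Qed.

Variables (h : E -> 'rV[R]_d -> R) (H : R).
Hypothesis h_le : forall i y, `|h i y| <= H.

Definition mart_incr N (w : traj E d N) k :=
  h (pxi w k.+1) (pos w k) - \sum_j P (pxi w k) j * h j (pos w k).

Definition mart N (w : traj E d N) n := \sum_(0 <= k < n) mart_incr w k.

Lemma mart_rcons_traj N (v : traj E d N) j u n :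
  (n <= N)%N -> mart (rcons_traj v j u) n = mart v n.
Proof.
move=> nN; apply: eq_big_nat => k /andP[_ kn]; have kN := leq_trans kn nN.
by rewrite /mart_incr !scaled_pos_rcons_traj 1?ltnW // !pxi_rcons_traj // ltnW.
Qed.

Lemma martS N (w : traj E d N) n : mart w n.+1 = mart w n + mart_incr w n.
Proof. by rewrite /mart big_nat_recr. Qed.

Lemma mart_rcons_traj_last N (v : traj E d N) j u : mart (rcons_traj v j u) N.+1 =
  mart v N + (h j (pos v N) - \sum_i P (pxi v N) i * h i (pos v N)).
Proof.
rewrite martS mart_rcons_traj // /mart_incr.
by rewrite pxi_rcons_traj_last pxi_rcons_traj // scaled_pos_rcons_traj.
Qed.

Lemma norm_transition_le (i : E) y : `|\sum_j P i j * h j y| <= H.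
Proof.
have [P0 P1] := sP.
apply: le_trans (norm_sum_mul_le _ (h_le ^~ y)) _.
by under eq_bigr do rewrite ger0_norm //; rewrite P1 mul1r.
Qed.

Lemma norm_centered_le (i j : E) y : `|h j y - \sum_k P i k * h k y| <= 2 * H.
Proof.
by rewrite mulr2n mulrDl mul1r (le_trans (ler_normB _ _)) // lerD ?norm_transition_le.
Qed.

Lemma sum_transition_mart_sq N (v : traj E d N) :
  \sum_j \sum_u P (pxi v N) j * p (pxi v N) (pos v N) u * mart (rcons_traj v j u) N.+1 ^+ 2
  <= mart v N ^+ 2 + 4 * H ^+ 2.
Proof.
have [P0 P1] := sP.
under eq_bigr do under eq_bigr do rewrite mart_rcons_traj_last.
set y := pos v N; set i := pxi v N; set c := \sum_k P i k * h k y.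
rewrite (sum_transition_dir _ _ (fun j => (mart v N + (h j y - c)) ^+ 2)).
rewrite sum_weighted_sqrD //; last first.
  by under eq_bigr do rewrite mulrBr; rewrite sumrB -mulr_suml P1 mul1r subrr.
have -> : 4 * H ^+ 2 = \sum_j P i j * (2 * H) ^+ 2 by rewrite -mulr_suml P1 mul1r; ring.
rewrite lerD2l; apply: ler_sum => j _.
by apply: ler_wpM2l => //; apply: sqr_le_of_norm_le; exact: norm_centered_le.
Qed.

Lemma expect_mart_sq_le N n : (n <= N)%N ->
  expect (fun w : traj E d N => mart w n ^+ 2) <= 4 * H ^+ 2 * n%:R * init_mass.
Proof.
elim: N n => [|N IH] n nN.
  move: nN; rewrite leqn0 => /eqP ->.
  by rewrite /expect big1 ?mulr0 ?mul0r // => w _; rewrite /mart big_geq // expr0n mulr0.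
have [nN'|] := leqP n N.
  rewrite (@expect_rcons_traj_const N (fun w => mart w n ^+ 2)) ?IH // => v j u.
  by rewrite mart_rcons_traj.
move=> Nn; have -> : n = N.+1 by apply/eqP; rewrite eqn_leq nN.
rewrite expect_rcons_traj.
apply: le_trans (ler_expect (G := fun v => mart v N ^+ 2 + 4 * H ^+ 2) _) _.
  exact: sum_transition_mart_sq.
rewrite expectD expect_cst [N.+1%:R]mulrSr mulrDr mulrDl mulr1.
exact: lerD (IH N (leqnn N)) _.
Qed.

End Expectation.

Section PoissonSolutionBounds.
Variables (R : realType) (E : finType) (P : E -> E -> R) (mu : E -> R).
Hypotheses (sP : stochastic P) (irrP : irreducible P).
Hypotheses (mu_prob : probability_on mu) (mu_inv : invariant_law P mu).
Variables (V : normedZmodType R) (f : E -> V -> R) (B L : R).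
Hypotheses (f_le : forall k y, `|f k y| <= B)
  (f_lip : forall k y z, `|f k y - f k z| <= L * `|y - z|).

Lemma norm_avg_le (g : E -> R) c : (forall i, `|g i| <= c) -> `|\sum_i g i * mu i| <= c.
Proof.
have [mu0 mu1] := mu_prob; move=> gc.
under eq_bigr do rewrite mulrC.
apply: le_trans (norm_sum_mul_le _ gc) _.
by under eq_bigr do rewrite ger0_norm //; rewrite mu1 mul1r.
Qed.

Lemma poisson_solution_bounded_lipschitz : exists (h : E -> V -> R) (H Lh : R),
  [/\ 0 <= H, 0 <= Lh, forall i y, `|h i y| <= H,
      forall i y z, `|h i y - h i z| <= Lh * `|y - z| &
      forall i y, f i y - \sum_j f j y * mu j = h i y - \sum_k P i k * h k y].
Proof.
have [_ mu1] := mu_prob.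
have [Q solQ] := poisson_equation sP irrP mu_prob mu_inv.
pose g i y := f i y - \sum_j f j y * mu j.
pose SQ := \sum_i \sum_j `|Q j i|.
have SQ0 : 0 <= SQ by rewrite !sumr_ge0 // => *; rewrite sumr_ge0.
have SQi i : \sum_j `|Q j i| <= SQ.
  by rewrite /SQ [X in _ <= X](bigD1 i) //= lerDl sumr_ge0 // => *; rewrite sumr_ge0.
have g_le i y : `|g i y| <= 2 * `|B|.
  have fB k : `|f k y| <= `|B| by rewrite (le_trans (f_le k y)) ?ler_norm.
  by rewrite mulr2n mulrDl mul1r (le_trans (ler_normB _ _)) // lerD ?norm_avg_le.
have g_lip i y z : `|g i y - g i z| <= 2 * `|L| * `|y - z|.
  have fL k : `|f k y - f k z| <= `|L| * `|y - z|.
    by rewrite (le_trans (f_lip k y z)) // ler_wpM2r ?ler_norm.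
  rewrite (_ : g i y - g i z = (f i y - f i z) - \sum_j (f j y - f j z) * mu j); last first.
    by rewrite /g; under [in RHS]eq_bigr do rewrite mulrBl; rewrite sumrB; ring.
  by rewrite !mulr2n !mulrDl !mul1r (le_trans (ler_normB _ _)) // lerD ?norm_avg_le.
exists (fun i y => \sum_j g j y * Q j i), (2 * `|B| * SQ), (2 * `|L| * SQ); split.
- by rewrite !mulr_ge0.
- by rewrite !mulr_ge0.
- move=> i y; rewrite mulrC; under eq_bigr do rewrite mulrC.
  apply: le_trans (norm_sum_mul_le _ (g_le ^~ y)) _.
  by rewrite ler_wpM2r ?mulr_ge0.
- move=> i y z; rewrite -sumrB; under eq_bigr do rewrite -mulrBl mulrC.
  apply: le_trans (norm_sum_mul_le _ (fun j => g_lip j y z)) _.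
  by rewrite [X in _ <= X]mulrAC mulrC ler_wpM2l ?mulr_ge0.
- move=> i y; rewrite solQ //.
  rewrite /g; under eq_bigr do rewrite mulrBr; rewrite sumrB -mulr_suml mu1 mul1r.
  by apply/eqP; rewrite subr_eq0; apply/eqP/eq_bigr => j _; rewrite mulrC.
Qed.

End PoissonSolutionBounds.

Lemma exceed_le_sum_sqr (R : realType) (I : finType) (x : I -> R) (a : R) (j : I) :
  0 < a -> a < `|x j| -> 1 <= \sum_i x i ^+ 2 / a ^+ 2.
Proof.
move=> a0 axj; apply: (@le_trans _ _ (x j ^+ 2 / a ^+ 2)).
  rewrite ler_pdivlMr ?exprn_gt0 // mul1r -[x j ^+ 2]real_normK ?num_real //.
  by rewrite lerXn2r ?nnegrE ?(ltW a0) ?(ltW axj).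
by rewrite (bigD1 j) //= lerDl sumr_ge0 // => i _; rewrite divr_ge0 ?sqr_ge0.
Qed.

Section Decomposition.
Variables (R : realType) (E : finType) (d : nat).
Variables (P : E -> E -> R) (p : E -> 'rV[R]_d -> dir d -> R) (nu : E -> R) (m : nat).
Hypotheses (sP : stochastic P) (p_ge0 : forall k y u, 0 <= p k y u)
  (p_sum1 : forall k y, \sum_u p k y u = 1) (nu_ge0 : forall i, 0 <= nu i).
Variables (f h : E -> 'rV[R]_d -> R) (fb : 'rV[R]_d -> R) (H Lh : R).
Hypotheses (H0 : 0 <= H) (Lh0 : 0 <= Lh).
Hypotheses (h_le : forall i y, `|h i y| <= H)
  (h_lip : forall i y z, `|h i y - h i z| <= Lh * `|y - z|)
  (poisson_h : forall i y, f i y - fb y = h i y - \sum_k P i k * h k y).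

Local Notation pos := (scaled_pos R m).
Local Notation M := (mart P m h).

Definition remainder N (w : traj E d N) n :=
  (h (pxi w 0) (pos w 0) - h (pxi w n) (pos w n)) +
  \sum_(0 <= k < n) (h (pxi w k.+1) (pos w k.+1) - h (pxi w k.+1) (pos w k)).

Lemma sum_centered_mart_remainder N (w : traj E d N) n :
  \sum_(0 <= k < n) (f (pxi w k) (pos w k) - fb (pos w k)) = M w n + remainder w n.
Proof.
pose F k := h (pxi w k) (pos w k).
have tel : F 0%N - F n = \sum_(0 <= k < n) (F k - F k.+1).
  rewrite -opprB -telescope_sumr // -sumrN.
  by apply: eq_bigr => k _; rewrite opprB.
rewrite /remainder -/(F 0%N) -/(F n) tel /mart -!big_split; apply: eq_bigr => k _ /=.
by rewrite poisson_h /mart_incr /F; ring.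
Qed.

Lemma norm_remainder_le N (w : traj E d N) n :
  `|remainder w n| <= 2 * H + n%:R * (Lh * (step_norm R d / m%:R)).
Proof.
apply: le_trans (ler_normD _ _) _; apply: lerD.
  by rewrite mulr2n mulrDl mul1r (le_trans (ler_normB _ _)) // lerD.
apply: le_trans (ler_norm_sum _ _ _) _; rewrite -[n in n%:R]subn0 mulr_natl -sumr_const_nat.
apply: ler_sum => k _; apply: le_trans (h_lip _ _ _) _; apply: ler_wpM2l => //.
rewrite /scaled_pos -scalerBr normrZ ger0_norm ?invr_ge0 // mulrC.
by rewrite ler_wpM2r ?invr_ge0 ?norm_pS_succ.
Qed.

Lemma norm_mart_sub_le N (w : traj E d N) n1 n2 : (n1 <= n2)%N ->
  `|M w n2 - M w n1| <= (n2 - n1)%:R * (2 * H).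
Proof.
move=> n12; rewrite /mart (big_cat_nat (leq0n n1) n12) /= addrC addrK.
apply: le_trans (ler_norm_sum _ _ _) _; rewrite mulr_natl -sumr_const_nat.
by apply: ler_sum => k _; apply: (norm_centered_le sP h_le).
Qed.

Variable T : R.

Definition grid_slack := 4 * H + T * Lh * step_norm R d.

Lemma norm_sum_centered_le_grid N (w : traj E d N) n : (0 < m)%N ->
  n%:R <= m%:R ^+ 2 * T ->
  `|\sum_(0 <= k < n) (f (pxi w k) (pos w k) - fb (pos w k))| <=
  `|M w (m * (n %/ m))| + m%:R * grid_slack.
Proof.
move=> m0 nT; have mR0 : 0 < m%:R :> R by rewrite ltr0n.
have step_norm0 : 0 <= step_norm R d by exact: sumr_ge0.
rewrite sum_centered_mart_remainder.
have grid_n : (m * (n %/ m) <= n)%N by rewrite mulnC leq_divM.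
have n_grid : (n - m * (n %/ m) <= m)%N.
  by rewrite {1}(divn_eq n m) mulnC addKn ltnW // ltn_pmod.
have Mn := norm_mart_sub_le w grid_n.
have Rn := norm_remainder_le w n.
have Mm : (n - m * (n %/ m))%:R * (2 * H) <= m%:R * (2 * H).
  by rewrite ler_wpM2r ?mulr_ge0 // ler_nat.
have Rm : n%:R * (Lh * (step_norm R d / m%:R)) <= m%:R * (T * Lh * step_norm R d).
  have -> : m%:R * (T * Lh * step_norm R d) = m%:R ^+ 2 * T * (Lh * (step_norm R d / m%:R)).
    by field; rewrite gt_eqF.
  by rewrite ler_wpM2r // mulr_ge0 // divr_ge0 // ltW.
have H1 : H <= m%:R * H by rewrite ler_peMl // ler1n.
rewrite (le_trans (ler_normD _ _)) // -[M w n](subrK (M w (m * (n %/ m)))).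
rewrite /grid_slack; apply: le_trans (lerD (ler_normD _ _) Rn) _; lra.
Qed.

Lemma prob_exceed_le_grid_moments N (A : traj E d N -> Prop) (a : R) :
  (0 < m)%N -> 0 < a -> m%:R * grid_slack <= a -> N%:R <= m%:R ^+ 2 * T ->
  (forall w, A w -> exists2 n, (n <= N)%N &
     a + a < `|\sum_(0 <= k < n) (f (pxi w k) (pos w k) - fb (pos w k))|) ->
  prob_event P p nu m A <=
  \sum_(j < (N %/ m).+1) expect P p nu m (fun w : traj E d N => M w (m * j) ^+ 2) / a ^+ 2.
Proof.
move=> m0 a0 slack_le NT hA.
under eq_bigr do rewrite -expectMr; rewrite -expect_sum.
apply: (prob_event_le_expect _ sP p_ge0 nu_ge0) => [w|w /hA [n nN Gn]].
  by rewrite sumr_ge0 // => j _; rewrite divr_ge0 ?sqr_ge0.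
have jN : (n %/ m < (N %/ m).+1)%N by rewrite ltnS leq_div2r.
apply: (exceed_le_sum_sqr (x := fun j : 'I_(N %/ m).+1 => M w (m * j)) (j := Ordinal jN) a0).
have nT : n%:R <= m%:R ^+ 2 * T by rewrite (le_trans _ NT) // ler_nat.
have := norm_sum_centered_le_grid w m0 nT; lra.
Qed.

Lemma sum_expect_grid_sq_le N (a : R) :
  \sum_(j < (N %/ m).+1) expect P p nu m (fun w : traj E d N => M w (m * j) ^+ 2) / a ^+ 2
  <= (N %/ m).+1%:R * (4 * H ^+ 2 * N%:R * init_mass d nu / a ^+ 2).
Proof.
rewrite mulr_natl -[X in _ <= _ *+ X]card_ord -sumr_const; apply: ler_sum => j _.
apply: ler_wpM2r; first by rewrite invr_ge0 sqr_ge0.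
have mjN : (m * j <= N)%N.
  have jN : (j <= N %/ m)%N by rewrite -ltnS.
  by rewrite (leq_trans (leq_mul (leqnn m) jN)) // mulnC leq_divM.
apply: le_trans (expect_mart_sq_le m sP p_ge0 p_sum1 nu_ge0 h_le mjN) _.
by rewrite ler_wpM2r ?init_mass_ge0 // ler_wpM2l ?mulr_ge0 ?sqr_ge0 // ler_nat.
Qed.

Variable eps : R.

Definition exceed_bound := 16 * H ^+ 2 * init_mass d nu * T * (T + 1) / eps ^+ 2.

Lemma prob_exceed_le N (A : traj E d N -> Prop) : 0 < eps -> (0 < m)%N ->
  2 * grid_slack / eps <= m%:R -> N%:R <= m%:R ^+ 2 * T ->
  (forall w, A w -> exists2 n, (n <= N)%N &
     eps * m%:R ^+ 2 < `|\sum_(0 <= k < n) (f (pxi w k) (pos w k) - fb (pos w k))|) ->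
  prob_event P p nu m A <= exceed_bound / m%:R.
Proof.
move=> eps0 m0 m_large NT hA; have mR0 : 0 < m%:R :> R by rewrite ltr0n.
(* [a] is kept opaque: unfolding it makes unification and [lra] blow up *)
have [a a_def] : {a : R | a = eps * m%:R ^+ 2 / 2} by exists (eps * m%:R ^+ 2 / 2).
have a0 : 0 < a by rewrite a_def divr_gt0 // mulr_gt0 // exprn_gt0.
have slack_le : m%:R * grid_slack <= a.
  by move: m_large; rewrite ler_pdivrMr // a_def ler_pdivlMr // => ?; nra.
have aa : a + a = eps * m%:R ^+ 2 by rewrite a_def; field.
apply: le_trans (prob_exceed_le_grid_moments m0 a0 slack_le NT _) _.
  by move=> w /hA [n nN Gn]; exists n; rewrite // aa.
apply: le_trans (sum_expect_grid_sq_le N a) _.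
have q_le : (N %/ m).+1%:R <= m%:R * (T + 1).
  have qm : (N %/ m * m)%:R <= m%:R ^+ 2 * T by rewrite (le_trans _ NT) // ler_nat leq_divM.
  have qT : (N %/ m)%:R <= m%:R * T.
    by rewrite -(ler_pM2r mR0) -natrM (le_trans qm) // expr2 mulrAC.
  by rewrite -natr1 mulrDr mulr1 lerD // ler1n.
have [c0 H2] : 0 <= init_mass d nu /\ 0 <= 4 * H ^+ 2.
  by rewrite init_mass_ge0 // mulr_ge0 ?sqr_ge0.
have -> : exceed_bound / m%:R = m%:R * (T + 1) *
    (4 * H ^+ 2 * (m%:R ^+ 2 * T) * init_mass d nu / a ^+ 2).
  by rewrite /exceed_bound a_def; field; rewrite !gt_eqF.
apply: ler_pM => //; first by rewrite !mulr_ge0 ?invr_ge0 ?exprn_ge0 // ltW.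
apply: ler_wpM2r; first by rewrite invr_ge0 sqr_ge0.
by apply: ler_wpM2r => //; apply: ler_wpM2l.
Qed.

End Decomposition.

Lemma cvg0_le_inv (R : realType) (u : nat -> R) (K : R) :
  (forall m, 0 <= u m) -> (\forall m \near \oo, u m <= K / m%:R) -> u @ \oo --> 0.
Proof.
move=> u0 uK; apply: (@squeeze_cvgr _ _ _ _ (fun=> 0) (fun m => K / m%:R)).
- by apply: filterS uK => m umK; rewrite u0 umK.
- exact: cvg_cst.
have inv0 : (fun m : nat => (m%:R : R)^-1) @ \oo --> 0.
  rewrite gtr0_cvgV0; first exact: cvgr_idn.
  by exists 1%N => // n /= n1; rewrite ltr0n.
by have := cvgMl_tmp (a := K) inv0; rewrite mulr0; apply; exact: _.
Qed.

Theorem proposition4p5 (R : realType) (d : nat) (E : finType)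
  (P : E -> E -> R) (mu : E -> R)
  (p : E -> 'rV[R]_d -> dir d -> R)
  (nu : E -> R) (f : E -> 'rV[R]_d -> R) (T : R) :
  (0 < d)%N ->
  stochastic P -> irreducible P -> aperiodic P ->
  probability_on mu -> invariant_law P mu ->
  (forall k y, probability_on (p k y)) ->
  (forall k u, C2_bounded (fun y => p k y u)) ->
  (forall y, \sum_(k : E) mu k *: (\sum_(u : dir d) p k y u *: dvec R u) = 0) ->
  probability_on nu ->
  (exists B : R, forall k y, `|f k y| <= B) ->
  (exists L : R, forall k y z, `|f k y - f k z| <= L * `|y - z|) ->
  0 <= T ->
  let fbar := fun y => \sum_(i : E) f i y * mu i in
  forall eps : R, 0 < eps ->
  (fun m : nat =>
     @prob_event R E d P p nu m (Num.truncn ((m%:R) ^+ 2 * T))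
       (fun w => exists t : R, 0 <= t <= T /\
          eps < ((m%:R) ^+ 2)^-1 *
            `| \sum_(k < Num.truncn ((m%:R) ^+ 2 * t))
                   f (pxi w k) ((m%:R)^-1 *: pS R w k)
               - \sum_(k < Num.truncn ((m%:R) ^+ 2 * t))
                   fbar ((m%:R)^-1 *: pS R w k) |))
  @ \oo --> (0 : R).
Proof.
move=> _ sP irrP _ mu_prob mu_inv p_prob _ _ [nu_ge0 _] [B f_le] [L f_lip] T0 fbar eps eps0.
have p_ge0 k y u : 0 <= p k y u by exact: (p_prob k y).1.
have p_sum1 k y : \sum_u p k y u = 1 by exact: (p_prob k y).2.
have [h [H [Lh [H0 Lh0 h_le h_lip poisson_h]]]] :=
  poisson_solution_bounded_lipschitz sP irrP mu_prob mu_inv f_le f_lip.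
apply: (cvg0_le_inv (K := exceed_bound d nu H T eps)).
  by move=> m; apply: sumr_ge0 => w _; apply: path_prob_ge0.
near=> m.
have m0 : (0 < m)%N by near: m; exists 1%N.
apply: (prob_exceed_le sP p_ge0 p_sum1 nu_ge0 H0 Lh0 h_le h_lip poisson_h eps0 m0).
- by near: m; apply: nbhs_infty_ger.
- by rewrite truncn_le mulr_ge0 ?exprn_ge0.
move=> w [t [/andP[t0 tT] exceed]]; exists (Num.truncn (m%:R ^+ 2 * t)).
  by apply: le_truncn; rewrite ler_wpM2l ?exprn_ge0.
by move: exceed; rewrite ltr_pdivlMl ?exprn_gt0 ?ltr0n // mulrC sumrB !big_mkord.
Unshelve. all: end_near.
Qed.
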